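(* Let $\Gamma_i$ be a graph of maximum degree $\Delta_i$, $i\in\{1,2\}$, and let $k_1,k_2$ be integers. Then for every integer $k\le\min\{k_1-\Delta_2,k_2-\Delta_1\}$, $a_k^o(\Gamma_1\times\Gamma_2)\le a_{k_1}^o(\Gamma_1)\,a_{k_2}^o(\Gamma_2)$.
   Context: Graphs are finite and simple. In a graph $G=(V,E)$, for $S\subseteq V$ and $v\in V$, $\delta_S(v)$ is the number of neighbours of $v$ in $S$, $\overline{S}=V\setminus S$, and $\partial(S)$ the set of vertices of $\overline{S}$ with a neighbour in $S$. A nonempty $S\subseteq V$ is an offensive $k$-alliance in $G$ if $\delta_S(v)\ge\delta_{\overline{S}}(v)+k$ for every $v\in\partial(S)$; $a_k^o(G)$ denotes the minimum cardinality of an offensive $k$-alliance in $G$. The Cartesian product $\Gamma_1\times\Gamma_2$ has vertex set $V_1\times V_2$, with $(u,v)\sim(u',v')$ iff either $u=u'$ and $v\sim v'$, or $v=v'$ and $u\sim u'$. *)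

From mathcomp Require Import all_boot all_order all_algebra.
Set Implicit Arguments. Unset Strict Implicit. Unset Printing Implicit Defensive.
Import Order.TTheory GRing.Theory Num.Theory.

Definition simple_graph (T : finType) (e : rel T) : Prop :=
  symmetric e /\ irreflexive e.

Definition deltaS (T : finType) (e : rel T) (S : {set T}) (v : T) : nat :=
  #|[set u in S | e v u]|.

Definition deg (T : finType) (e : rel T) (v : T) : nat := #|[set u | e v u]|.
Definition maxdeg (T : finType) (e : rel T) : nat := \max_(v : T) deg e v.

Definition boundary (T : finType) (e : rel T) (S : {set T}) : {set T} :=
  [set v in ~: S | [exists u in S, e v u]].

Definition offensive_alliance (T : finType) (e : rel T) (k : int) (S : {set T}) : bool :=
  (S != set0) &&
  [forall v in boundary e S, ((deltaS e S v)%:Z >= (deltaS e (~: S) v)%:Z + k)%R].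

(* For a nonempty
   vertex set, setT is always an offensive k-alliance (empty boundary), so the
   default value #|T| = #|setT| does not affect the minimum. *)
Definition a_off (T : finType) (e : rel T) (k : int) : nat :=
  \big[minn/#|T|]_(S : {set T} | offensive_alliance e k S) #|S|.

Definition cart_rel (T1 T2 : finType) (e1 : rel T1) (e2 : rel T2) : rel (T1 * T2) :=
  fun x y => ((x.1 == y.1) && e2 x.2 y.2) || ((x.2 == y.2) && e1 x.1 y.1).

From mathcomp Require Import all_boot all_order all_algebra.
From mathcomp Require Import zify.
Set Implicit Arguments. Unset Strict Implicit.

(* If S1 is an offensive k1-alliance of G1 and S2 an offensive k2-alliance of
   G2, then S1 x S2 is an offensive k-alliance of G1 x G2.  A boundary vertex
   (u, v) of S1 x S2 has, say, u in S1 and v on the boundary of S2; its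
   neighbours in S1 x S2 include the (u, v') with v' a neighbour of v in S2,
   while its neighbours outside are the (u, v') with v' outside S2 plus at
   most deg u <= Delta_1 vertices (u', v).  Hence k <= k2 - Delta_1 suffices.
   Taking S1, S2 of minimum size gives the bound. *)

Lemma a_off_le (T : finType) (e : rel T) k (S : {set T}) :
  offensive_alliance e k S -> a_off e k <= #|S|.
Proof.
move=> hS; rewrite /a_off.
have : S \in index_enum {set T} by rewrite mem_index_enum.
elim: (index_enum _) => [//|S' r IH]; rewrite inE big_cons.
case/orP=> [/eqP<-|hr]; first by rewrite hS geq_minl.
case: ifP => _; last exact: IH.
exact: leq_trans (geq_minr _ _) (IH hr).
Qed.

Lemma offensive_allianceT (T : finType) (e : rel T) k :
  0 < #|T| -> offensive_alliance e k [set: T].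
Proof.
move=> hT; apply/andP; split; first by rewrite -card_gt0 cardsT.
by apply/forallP => v; rewrite !inE.
Qed.

Lemma a_off_attained (T : finType) (e : rel T) k : 0 < #|T| ->
  exists2 S, offensive_alliance e k S & a_off e k = #|S|.
Proof.
move=> hT; rewrite /a_off.
apply: (big_ind (fun n => exists2 S, offensive_alliance e k S & n = #|S|)).
- by exists setT; [exact: offensive_allianceT | rewrite cardsT].
- move=> _ _ [S hS ->] [S' hS' ->].
  case: (leqP #|S| #|S'|) => h.
    by exists S => //; apply/esym/minn_idPl.
  by exists S' => //; apply/esym/minn_idPr/ltnW.
- by move=> S hS; exists S.
Qed.

Lemma deg_le_maxdeg (T : finType) (e : rel T) v : deg e v <= maxdeg e.
Proof. exact: (leq_bigmax (F := deg e)). Qed.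

Section CartesianProduct.
Variables (T1 T2 : finType) (e1 : rel T1) (e2 : rel T2).
Variables (S1 : {set T1}) (S2 : {set T2}).
Local Notation e := (cart_rel e1 e2).

Lemma boundary_setX u v : (u, v) \in boundary e (setX S1 S2) ->
  (u \in S1 /\ v \in boundary e2 S2) \/ (v \in S2 /\ u \in boundary e1 S1).
Proof.
rewrite !inE /= => /andP[huv /existsP[[a b] /andP[]]].
rewrite inE /cart_rel /= => /andP[ha hb].
case/orP=> /andP[/eqP eq_coord hc]; subst.
- left; rewrite ha /= in huv; split=> //; rewrite huv.
  by apply/existsP; exists b; rewrite hb.
- right; rewrite hb andbT in huv; split=> //; rewrite huv.
  by apply/existsP; exists a; rewrite ha.
Qed.

Lemma deltaS_setX_l u v : u \in S1 ->
  deltaS e2 S2 v <= deltaS e (setX S1 S2) (u, v).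
Proof.
move=> hu; rewrite /deltaS.
rewrite -(card_imset _ (fun x y (h : (u, x) = (u, y)) => congr1 snd h)).
apply: subset_leq_card; apply/subsetP => _ /imsetP[v' + ->].
by rewrite !inE /cart_rel /= hu eqxx => /andP[-> ->].
Qed.

Lemma deltaS_setX_r u v : v \in S2 ->
  deltaS e1 S1 u <= deltaS e (setX S1 S2) (u, v).
Proof.
move=> hv; rewrite /deltaS.
rewrite -(card_imset _ (fun x y (h : (x, v) = (y, v)) => congr1 fst h)).
apply: subset_leq_card; apply/subsetP => _ /imsetP[u' + ->].
by rewrite !inE /cart_rel /= hv eqxx andbT orbC => /andP[-> ->].
Qed.

Lemma deltaS_setCX_l u v : u \in S1 ->
  deltaS e (~: setX S1 S2) (u, v) <= deltaS e2 (~: S2) v + deg e1 u.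
Proof.
move=> hu; rewrite /deltaS /deg.
apply: (@leq_trans #|(pair u @: [set v' in ~: S2 | e2 v v'])
                     :|: ((fun u' => (u', v)) @: [set u' | e1 u u'])|).
  apply: subset_leq_card; apply/subsetP => [[a b]].
  rewrite !inE /cart_rel /= => /andP[hn /orP[/andP[/eqP ea h]|/andP[/eqP eb h]]]; subst.
    apply/orP; left; apply/imsetP; exists b; rewrite // !inE h andbT.
    by rewrite hu in hn.
  by apply/orP; right; apply/imsetP; exists a; rewrite ?inE.
rewrite cardsU; apply: leq_trans (leq_subr _ _) _.
by apply: leq_add; apply: leq_imset_card.
Qed.

Lemma deltaS_setCX_r u v : v \in S2 ->
  deltaS e (~: setX S1 S2) (u, v) <= deltaS e1 (~: S1) u + deg e2 v.
Proof.
move=> hv; rewrite /deltaS /deg.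
apply: (@leq_trans #|((fun u' => (u', v)) @: [set u' in ~: S1 | e1 u u'])
                     :|: (pair u @: [set v' | e2 v v'])|).
  apply: subset_leq_card; apply/subsetP => [[a b]].
  rewrite !inE /cart_rel /= => /andP[hn /orP[/andP[/eqP ea h]|/andP[/eqP eb h]]]; subst.
    by apply/orP; right; apply/imsetP; exists b; rewrite ?inE.
  apply/orP; left; apply/imsetP; exists a; rewrite // !inE h andbT.
  by rewrite hv andbT in hn.
rewrite cardsU; apply: leq_trans (leq_subr _ _) _.
by apply: leq_add; apply: leq_imset_card.
Qed.

Lemma offensive_alliance_setX (k1 k2 k : int) :
  offensive_alliance e1 k1 S1 -> offensive_alliance e2 k2 S2 ->
  (k <= k1 - (maxdeg e2)%:Z)%R -> (k <= k2 - (maxdeg e1)%:Z)%R ->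
  offensive_alliance e k (setX S1 S2).
Proof.
move=> /andP[/set0Pn[x hx] /forallP h1] /andP[/set0Pn[y hy] /forallP h2] hk1 hk2.
apply/andP; split; first by apply/set0Pn; exists (x, y); rewrite in_setX hx hy.
apply/forallP => -[u v]; apply/implyP.
case/boundary_setX => [[hu hv] | [hv hu]].
- have := implyP (h2 v) hv; have := deltaS_setX_l v hu.
  have := deltaS_setCX_l v hu; have := deg_le_maxdeg e1 u.
  lia.
- have := implyP (h1 u) hu; have := deltaS_setX_r u hv.
  have := deltaS_setCX_r u hv; have := deg_le_maxdeg e2 v.
  lia.
Qed.

End CartesianProduct.

Theorem mainTheorem12 (T1 T2 : finType) (e1 : rel T1) (e2 : rel T2)
  (G1 : simple_graph e1) (G2 : simple_graph e2)
  (ne1 : 0 < #|T1|) (ne2 : 0 < #|T2|)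
  (k1 k2 k : int)
  (hk : (k <= Num.min (k1 - (maxdeg e2)%:Z) (k2 - (maxdeg e1)%:Z))%R) :
  a_off (cart_rel e1 e2) k <= a_off e1 k1 * a_off e2 k2.
Proof.
have [S1 hS1 ->] := a_off_attained e1 k1 ne1.
have [S2 hS2 ->] := a_off_attained e2 k2 ne2.
move: hk; rewrite Order.TotalTheory.le_min => /andP[hk1 hk2].
rewrite -cardsX; apply: a_off_le.
exact: (offensive_alliance_setX hS1 hS2 hk1 hk2).
Qed.
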